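(* Let $R$ be a ring and let $m$ and $n$ be positive integers. (1) A proper ideal $I$ of $R$ is weakly $n$-absorbing if and only if for every integer $m>n$ and all $x_1,\dots,x_m\in R$ with $0\neq x_1\cdots x_m\in I$, there are $n$ of the $x_i$'s whose product is in $I$. (2) If $I$ is a weakly $n$-absorbing ideal of $R$, then $I$ is a weakly $m$-absorbing ideal of $R$ for all $m\geq n$. (3) If $k\geq1$ and, for each $1\leq i\leq k$, $I_i$ is a weakly $n_i$-absorbing ideal of $R$ (with $n_i$ positive integers), then $I_1\cap\cdots\cap I_k$ is a weakly $n$-absorbing ideal of $R$ for $n=n_1+\cdots+n_k$. In particular, if $P_1,\dots,P_n$ are weakly prime ideals of $R$, then $P_1\cap\cdots\cap P_n$ is a weakly $n$-absorbing ideal of $R$. (4) If $P_1,\dots,P_n$ are weakly prime ideals of $R$ that are pairwise comaximal, then $P_1\cdots P_n$ is a weakly $n$-absorbing ideal of $R$.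
   Context: All rings are commutative with $1\neq0$. A proper ideal $I$ of $R$ is weakly $n$-absorbing if whenever $0\neq a_1\cdots a_{n+1}\in I$ with $a_1,\dots,a_{n+1}\in R$, there are $n$ of the $a_i$'s whose product is in $I$. A proper ideal $P$ is weakly prime if whenever $a,b\in R$ and $0\neq ab\in P$, then $a\in P$ or $b\in P$. *)

From mathcomp Require Import all_boot all_order all_algebra.
Set Implicit Arguments. Unset Strict Implicit. Unset Printing Implicit Defensive.
Import GRing.Theory.
Local Open Scope ring_scope.

Section Ideals.
Variable R : comNzRingType.

Definition is_ideal_p (I : R -> Prop) : Prop :=
  [/\ I 0, (forall x y, I x -> I y -> I (x + y)), (forall x, I x -> I (- x))
    & (forall r x, I x -> I (r * x))].

Definition proper_ideal_p (I : R -> Prop) : Prop := is_ideal_p I /\ ~ I 1.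

Definition weakly_n_absorbing (n : nat) (I : R -> Prop) : Prop :=
  proper_ideal_p I /\
  forall a : 'I_n.+1 -> R,
    \prod_(i < n.+1) a i != 0 -> I (\prod_(i < n.+1) a i) ->
    exists j : 'I_n.+1, I (\prod_(i < n.+1 | i != j) a i).

Definition weakly_prime (P : R -> Prop) : Prop :=
  proper_ideal_p P /\
  forall a b : R, a * b != 0 -> P (a * b) -> P a \/ P b.

Definition ideal_cap (k : nat) (I : 'I_k -> R -> Prop) : R -> Prop :=
  fun x => forall i, I i x.

Definition ideal_prod (k : nat) (I : 'I_k -> R -> Prop) : R -> Prop :=
  fun x => exists (s : nat) (f : 'I_s -> 'I_k -> R),
    (forall j i, I i (f j i)) /\ x = \sum_(j < s) \prod_(i < k) f j i.

Definition comaximal (I J : R -> Prop) : Prop :=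
  exists a b, I a /\ J b /\ a + b = 1.

End Ideals.

From mathcomp Require Import all_boot all_order all_algebra.
From mathcomp Require Import zify ring.
From Stdlib Require Import FunctionalExtensionality PropExtensionality.
Import GRing.Theory.
Local Open Scope ring_scope.
Set Implicit Arguments. Unset Strict Implicit.

(* Merging two factors x_a, x_b of a nonzero product x_1...x_m in I (m > n + 1)
   into the single factor x_a x_b and arguing by induction on m, we find n of
   the resulting factors with product in I. If the merged factor is among them,
   the n + 1 original factors involved have a nonzero product in I, and the
   weakly n-absorbing property drops one of them. This gives (1) and (2); for
   (3), collecting n_i factors with product in I_i for each i gives at most
   n_1 + ... + n_k factors whose product lies in every I_i. A weakly prime ideal
   is weakly 1-absorbing, and (4) reduces to (3) because pairwise comaximal
   ideals have product equal to their intersection: P_1 is comaximal with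
   P_2 ... P_n, so every x in the intersection is x a + x b with a in P_1 and
   b in P_2 ... P_n. *)

Lemma card_bigcup_leq_sum (J T : finType) (S : J -> {set T}) :
  (#|\bigcup_j S j| <= \sum_j #|S j|)%N.
Proof.
apply: (big_ind2 (fun (A : {set T}) (n : nat) => #|A| <= n)%N) => //.
  by rewrite cards0.
move=> A1 n1 A2 n2 leA1 leA2; apply: leq_trans (leq_card_setU A1 A2) _.
exact: leq_add.
Qed.

Section Ideal.
Variables (R : comNzRingType) (I : R -> Prop).
Hypothesis idealI : is_ideal_p I.

Lemma ideal_mulr r x : I x -> I (x * r).
Proof. by case: idealI => _ _ _ mulI; rewrite mulrC; apply: mulI. Qed.

Lemma ideal_bigprodS (T : finType) (x : T -> R) (S B : {set T}) :
  S \subset B -> I (\prod_(i in S) x i) -> I (\prod_(i in B) x i).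
Proof. by move=> sSB IS; rewrite (big_setID S) /= (setIidPr sSB); apply: ideal_mulr. Qed.

Lemma ideal_all_but_one (T : finType) (x : T -> R) (S : {set T}) :
  (#|S| < #|T|)%N -> I (\prod_(i in S) x i) ->
  exists j, I (\prod_(i | i != j) x i).
Proof.
move=> ltST IS; have /card_gt0P[j] : (0 < #|~: S|)%N by rewrite cardsCs setCK subn_gt0.
rewrite inE => notSj; exists j; rewrite -big_set.
apply: ideal_bigprodS IS; apply/subsetP => i Si; rewrite inE.
by apply: contraNneq notSj => <-.
Qed.

End Ideal.

Lemma bigprod_neq0S (R : comNzRingType) (T : finType) (x : T -> R) (S B : {set T}) :
  S \subset B -> \prod_(i in B) x i != 0 -> \prod_(i in S) x i != 0.
Proof.
move=> sSB; rewrite (big_setID S) /= (setIidPr sSB).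
by apply: contraNneq => ->; rewrite mul0r.
Qed.

Lemma bigprod_merge (R : comNzRingType) (T : finType) (x : T -> R) a b
    (S : {set T}) :
  \prod_(i in S) (if i == a then x a * x b else x i) =
  (if a \in S then x b else 1) * \prod_(i in S) x i.
Proof.
have off (B : {set T}) : a \notin B ->
    \prod_(i in B) (if i == a then x a * x b else x i) = \prod_(i in B) x i.
  move=> notBa; apply: eq_bigr => i Bi; case: eqP => // eq_ia.
  by rewrite -eq_ia Bi in notBa.
case: ifP => [Sa | /negbT notSa]; last by rewrite mul1r off.
by rewrite !(big_setD1 _ Sa) eqxx off ?setD11 // mulrA (mulrC (x a)).
Qed.

Section WeaklyAbsorbing.
Variables (R : comNzRingType) (n : nat) (I : R -> Prop).
Hypothesis absI : weakly_n_absorbing n I.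

Lemma weakly_n_absorbing_set (T : finType) (x : T -> R) (A : {set T}) :
  #|A| = n.+1 -> \prod_(i in A) x i != 0 -> I (\prod_(i in A) x i) ->
  exists S : {set T}, [/\ S \subset A, #|S| = n & I (\prod_(i in S) x i)].
Proof.
move=> cardA; rewrite (big_enum_val (A := mem A)) => nz0 Iprod.
(* stated for every N = n.+1 so that it applies to the index type 'I_#|A| *)
have absN N (y : 'I_N -> R) : N = n.+1 ->
    \prod_(i < N) y i != 0 -> I (\prod_(i < N) y i) ->
    exists j : 'I_N, I (\prod_(i < N | i != j) y i).
  by move=> eqN; subst N; case: absI => _; apply.
have [j Ij] := absN _ (fun i => x (enum_val i)) cardA nz0 Iprod.
exists (A :\ enum_val j); split; first exact: subD1set.
  by move: (cardsD1 (enum_val j) A); rewrite enum_valP cardA => -[].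
rewrite (eq_bigl (fun i => (i \in A) && (i != enum_val j))); last first.
  by move=> i; rewrite !inE andbC.
rewrite (big_enum_val_cond (A := mem A)).
by rewrite (eq_bigl (fun i => i != j)) // => i; rewrite (inj_eq enum_val_inj).
Qed.

Lemma weakly_n_absorbing_subset (T : finType) (x : T -> R) (A : {set T}) :
  (n < #|A|)%N -> \prod_(i in A) x i != 0 -> I (\prod_(i in A) x i) ->
  exists S : {set T}, [/\ S \subset A, #|S| = n & I (\prod_(i in S) x i)].
Proof.
move=> /subnKC/esym; move: (#|A| - n.+1)%N => k.
elim: k => [|k IH] in x A *; first by rewrite addn0; apply: weakly_n_absorbing_set.
move=> cardA nz0 IA; have [a Aa] : exists a, a \in A.
  by apply/card_gt0P; rewrite cardA addnS.
have [b] : exists b, b \in A :\ a.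
  by apply/card_gt0P; move: (cardsD1 a A); rewrite Aa cardA; lia.
rewrite !inE => /andP[neq_ba Ab].
pose y t := if t == a then x a * x b else x t.
have y_merge : \prod_(i in A :\ b) y i = \prod_(i in A) x i.
  by rewrite bigprod_merge !inE eq_sym neq_ba Aa -big_setD1.
have cardAb : #|A :\ b| = (n.+1 + k)%N.
  by move: (cardsD1 b A); rewrite Ab cardA; lia.
rewrite -y_merge in nz0 IA.
have [S [sSAb cardS]] := IH y (A :\ b) cardAb nz0 IA.
have sSA : S \subset A := subset_trans sSAb (subD1set A b).
rewrite bigprod_merge; case: ifP => Sa IS; last by exists S; rewrite mul1r in IS.
have notSb : b \notin S by apply/negP => /(subsetP sSAb); rewrite !inE eqxx.
have sbSA : b |: S \subset A by rewrite subUset sub1set Ab.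
have [|||S' [sS'bS cardS' IS']] := @weakly_n_absorbing_set _ x (b |: S).
- by rewrite cardsU1 notSb cardS.
- by apply: bigprod_neq0S sbSA _; rewrite -y_merge.
- by rewrite big_setU1.
by exists S'; split => //; apply: subset_trans sS'bS sbSA.
Qed.

Lemma weakly_n_absorbing_ord m (x : 'I_m -> R) :
  (n < m)%N -> \prod_(i < m) x i != 0 -> I (\prod_(i < m) x i) ->
  exists S : {set 'I_m}, #|S| = n /\ I (\prod_(i in S) x i).
Proof.
have -> : \prod_(i < m) x i = \prod_(i in [set: 'I_m]) x i.
  by apply: eq_bigl => i; rewrite inE.
rewrite -[in (n < _)%N](card_ord m) -cardsT => ltnm nz0 IA.
by have [S [_ cardS IS]] := weakly_n_absorbing_subset ltnm nz0 IA; exists S.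
Qed.

End WeaklyAbsorbing.

Lemma weakly_n_absorbing_of_subsets (R : comNzRingType) n (I : R -> Prop) :
  proper_ideal_p I ->
  (forall x : 'I_n.+1 -> R, \prod_(i < n.+1) x i != 0 -> I (\prod_(i < n.+1) x i) ->
     exists2 S : {set 'I_n.+1}, (#|S| <= n)%N & I (\prod_(i in S) x i)) ->
  weakly_n_absorbing n I.
Proof.
move=> properI subsets; split=> // x nz0 Ix.
have [S cardS IS] := subsets x nz0 Ix.
by apply: ideal_all_but_one IS; [case: properI | rewrite card_ord].
Qed.

Lemma weakly_n_absorbingP (R : comNzRingType) n (I : R -> Prop) :
  proper_ideal_p I ->
  (weakly_n_absorbing n I <->
   forall m, (n < m)%N -> forall x : 'I_m -> R,
     \prod_(i < m) x i != 0 -> I (\prod_(i < m) x i) ->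
     exists S : {set 'I_m}, #|S| = n /\ I (\prod_(i in S) x i)).
Proof.
move=> properI; split=> [absI m ltnm x|subsets]; first exact: weakly_n_absorbing_ord.
apply: weakly_n_absorbing_of_subsets => // x nz0 Ix.
by have [S [cardS IS]] := subsets _ (ltnSn n) x nz0 Ix; exists S; rewrite ?cardS.
Qed.

Lemma weakly_n_absorbing_leq (R : comNzRingType) n m (I : R -> Prop) :
  (n <= m)%N -> weakly_n_absorbing n I -> weakly_n_absorbing m I.
Proof.
move=> lenm absI; apply: weakly_n_absorbing_of_subsets => [|x nz0 Ix].
  by case: absI.
have [S [cardS IS]] := weakly_n_absorbing_ord absI (leq_ltn_trans lenm (ltnSn m)) nz0 Ix.
by exists S; rewrite ?cardS.
Qed.

Lemma proper_ideal_cap (R : comNzRingType) k (I : 'I_k.+1 -> R -> Prop) :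
  (forall i, proper_ideal_p (I i)) -> proper_ideal_p (ideal_cap I).
Proof.
move=> properI; split; last by move/(_ ord0); case: (properI ord0).
split=> [i|x y Ix Iy i|x Ix i|r x Ix i]; case: (properI i) => -[] //.
- by move=> _ addI _ _ _; apply: addI.
- by move=> _ _ oppI _ _; apply: oppI.
- by move=> _ _ _ mulI _; apply: mulI.
Qed.

Lemma weakly_n_absorbing_cap (R : comNzRingType) k (I : 'I_k.+1 -> R -> Prop)
    (ns : 'I_k.+1 -> nat) :
  (forall i, weakly_n_absorbing (ns i) (I i)) ->
  weakly_n_absorbing (\sum_i ns i) (ideal_cap I).
Proof.
move=> absI; set N := (\sum_i ns i)%N.
apply: weakly_n_absorbing_of_subsets => [|x nz0 Ix].
  by apply: proper_ideal_cap => i; case: (absI i).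
have /fin_all_exists[S IS] i :
    exists S : {set 'I_N.+1}, #|S| = ns i /\ I i (\prod_(j in S) x j).
  have lt_nsN : (ns i < N.+1)%N by rewrite ltnS /N (bigD1 i) //= leq_addr.
  by have [S ?] := weakly_n_absorbing_ord (absI i) lt_nsN nz0 (Ix i); exists S.
exists (\bigcup_i S i).
  apply: leq_trans (card_bigcup_leq_sum S) _.
  by apply: leq_sum => i _; rewrite (proj1 (IS i)).
move=> i; apply: ideal_bigprodS (proj2 (IS i)); first by case: (absI i) => -[].
exact: bigcup_sup.
Qed.

Lemma weakly_prime_absorbing1 (R : comNzRingType) (P : R -> Prop) :
  weakly_prime P -> weakly_n_absorbing 1 P.
Proof.
case=> properP primeP; split=> // a; rewrite big_ord_recl big_ord1 => nz0 Pa.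
have [Pa0 | Pa1] := primeP _ _ nz0 Pa.
  by exists ord_max; rewrite big_mkcond big_ord_recl big_ord1 /= mulr1.
by exists ord0; rewrite big_mkcond big_ord_recl big_ord1 /= mul1r.
Qed.

Lemma weakly_prime_cap (R : comNzRingType) k (P : 'I_k.+1 -> R -> Prop) :
  (forall i, weakly_prime (P i)) -> weakly_n_absorbing k.+1 (ideal_cap P).
Proof.
move=> primeP; suff: weakly_n_absorbing (\sum_(i < k.+1) 1) (ideal_cap P).
  by rewrite sum1_card card_ord.
by apply: weakly_n_absorbing_cap => i; apply: weakly_prime_absorbing1.
Qed.

Section IdealProduct.
Variable R : comNzRingType.

Lemma ideal_prodD k (P : 'I_k -> R -> Prop) y z :
  ideal_prod P y -> ideal_prod P z -> ideal_prod P (y + z).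
Proof.
move=> [s1 [f1 [Pf1 ->]]] [s2 [f2 [Pf2 ->]]].
exists (s1 + s2)%N, (fun j => match split j with inl j1 => f1 j1 | inr j2 => f2 j2 end).
split; first by move=> j i; case: split.
rewrite big_split_ord /=; congr (_ + _); apply: eq_bigr => j _.
  by rewrite (unsplitK (inl j : 'I_s1 + 'I_s2)).
by rewrite (unsplitK (inr j : 'I_s1 + 'I_s2)).
Qed.

Lemma ideal_prodMl k (P : 'I_k.+1 -> R -> Prop) z y :
  P ord0 z -> ideal_prod (fun i => P (lift ord0 i)) y -> ideal_prod P (z * y).
Proof.
move=> Pz [s [f [Pf ->]]].
exists s, (fun j i => if unlift ord0 i is Some i' then f j i' else z); split.
  by move=> j i; case: unliftP => [i' ->|->] //; apply: Pf.
rewrite big_distrr; apply: eq_bigr => j _.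
by rewrite big_ord_recl unlift_none; congr (_ * _); apply: eq_bigr => i _; rewrite liftK.
Qed.

Lemma ideal_prod_sub_cap k (P : 'I_k -> R -> Prop) x :
  (forall i, is_ideal_p (P i)) -> ideal_prod P x -> ideal_cap P x.
Proof.
move=> idealP [s [f [Pf ->]]] i; have [P0 addP _ _] := idealP i.
apply: big_ind => // j _; rewrite (bigD1 i) //=.
exact: ideal_mulr.
Qed.

Lemma comaximal_ideal_prod k (J : R -> Prop) (Q : 'I_k -> R -> Prop) :
  is_ideal_p J -> (forall i, comaximal J (Q i)) -> comaximal J (ideal_prod Q).
Proof.
move=> [J0 addJ _ mulJ] comaxJQ.
have /fin_all_exists[b Jb] i : exists b, Q i b /\ J (1 - b).
  have [a [b [Ja [Qb <-]]]] := comaxJQ i.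
  by exists b; rewrite addrK.
exists (1 - \prod_i b i), (\prod_i b i); split; last split; last exact: subrK.
  apply: (big_rec (fun y => J (1 - y))) => [|i y _ Jy]; first by rewrite subrr.
  have -> : 1 - b i * y = (1 - b i) + b i * (1 - y) by ring.
  by apply: addJ; [case: (Jb i) | apply: mulJ].
exists 1%N, (fun _ i => b i); split; first by move=> _ i; case: (Jb i).
by rewrite big_ord1.
Qed.

Lemma ideal_cap_sub_prod k (P : 'I_k.+1 -> R -> Prop) x :
  (forall i, is_ideal_p (P i)) -> (forall i j, i != j -> comaximal (P i) (P j)) ->
  ideal_cap P x -> ideal_prod P x.
Proof.
elim: k => [|k IH] in P x * => idealP comaxP Px.
  by exists 1%N, (fun _ _ => x); rewrite !big_ord1.
pose Q i := P (lift ord0 i).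
have Qx : ideal_prod Q x.
  apply: IH => [i | i j neq_ij | i]; [exact: idealP | apply: comaxP | exact: Px].
  by rewrite (inj_eq lift_inj).
have [a [b [Pa [Qb ab1]]]] : comaximal (P ord0) (ideal_prod Q).
  by apply: comaximal_ideal_prod (idealP ord0) _ => i; apply/comaxP/neq_lift.
have -> : x = a * x + x * b by rewrite mulrC -mulrDr ab1 mulr1.
by apply: ideal_prodD; apply: ideal_prodMl.
Qed.

Lemma ideal_prod_comaximal k (P : 'I_k.+1 -> R -> Prop) :
  (forall i, is_ideal_p (P i)) -> (forall i j, i != j -> comaximal (P i) (P j)) ->
  ideal_prod P = ideal_cap P.
Proof.
move=> idealP comaxP; apply: functional_extensionality => x.
apply: propositional_extensionality; split; first exact: ideal_prod_sub_cap.
exact: ideal_cap_sub_prod.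
Qed.

Lemma weakly_prime_prod k (P : 'I_k.+1 -> R -> Prop) :
  (forall i, weakly_prime (P i)) -> (forall i j, i != j -> comaximal (P i) (P j)) ->
  weakly_n_absorbing k.+1 (ideal_prod P).
Proof.
move=> primeP comaxP; rewrite ideal_prod_comaximal //; first exact: weakly_prime_cap.
by move=> i; case: (primeP i) => -[].
Qed.

End IdealProduct.

Theorem mainTheorem11 (R : comNzRingType) :
  (* (1) *)
  (forall (n : nat) (I : R -> Prop), (0 < n)%N -> proper_ideal_p I ->
     (weakly_n_absorbing n I <->
      forall (m : nat), (n < m)%N -> forall x : 'I_m -> R,
        \prod_(i < m) x i != 0 -> I (\prod_(i < m) x i) ->
        exists S : {set 'I_m}, #|S| = n /\ I (\prod_(i in S) x i)))
  /\
  (* (2) *)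
  (forall (n : nat) (I : R -> Prop), (0 < n)%N -> weakly_n_absorbing n I ->
     forall m : nat, (n <= m)%N -> weakly_n_absorbing m I)
  /\
  (* (3) *)
  (forall (k : nat) (I : 'I_k -> R -> Prop) (ns : 'I_k -> nat), (1 <= k)%N ->
     (forall i, (0 < ns i)%N) ->
     (forall i, weakly_n_absorbing (ns i) (I i)) ->
     weakly_n_absorbing (\sum_(i < k) ns i)%N (ideal_cap I))
  /\
  (* (3), in particular *)
  (forall (n : nat) (P : 'I_n -> R -> Prop), (0 < n)%N ->
     (forall i, weakly_prime (P i)) ->
     weakly_n_absorbing n (ideal_cap P))
  /\
  (* (4) *)
  (forall (n : nat) (P : 'I_n -> R -> Prop), (0 < n)%N ->
     (forall i, weakly_prime (P i)) ->
     (forall i j, i != j -> comaximal (P i) (P j)) ->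
     weakly_n_absorbing n (ideal_prod P)).
Proof.
split; first by move=> n I _; exact: weakly_n_absorbingP.
split; first by move=> n I _ absI m lenm; exact: weakly_n_absorbing_leq absI.
split; first by move=> [|k] // I ns _ _; exact: weakly_n_absorbing_cap.
split; first by move=> [|n] // P _; exact: weakly_prime_cap.
by move=> [|n] // P _; exact: weakly_prime_prod.
Qed.
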